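(* Let $E$ be a semi-Montel space, $G\subset E'$ a linear subspace that determines boundedness, $\Omega\subset\mathbb{R}^d$ open and $k\in\mathbb{N}$. If $f\colon\Omega\to E$ is such that $e'\circ f\in\mathcal{C}^k(\Omega)$ for all $e'\in G$, then $f\in\mathcal{C}^k(\Omega,E)$.
   Context: $\mathbb{K}\in\{\mathbb{R},\mathbb{C}\}$. A semi-Montel space is a locally convex Hausdorff space over $\mathbb{K}$ in which every bounded set is relatively compact. $G\subset E'$ determines boundedness if every $\sigma(E,G)$-bounded subset of $E$ is bounded in $E$. $f\colon\Omega\to E$ is $\mathcal{C}^1$ if for each unit vector $e_n$ the limit $(\partial^{e_n})^Ef(x)=\lim_{h\to0,h\in\mathbb{R}\setminus\{0\}}(f(x+he_n)-f(x))/h$ exists in $E$ for all $x\in\Omega$ and is continuous in $x$; $\mathcal{C}^k$ is defined inductively (f is $\mathcal{C}^1$ and all first partial derivatives are $\mathcal{C}^{k-1}$). $\mathcal{C}^k(\Omega)$ is the scalar case. *)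

(* classical reals.  Locally convex spaces are represented,
   as usual, by a separating family of continuous seminorms. *)
From Stdlib Require Import Reals Lra List.
From Stdlib Require Vectors.Fin.
Open Scope R_scope.

Inductive Kfield : Type := KR | KC.

(* C is modelled as R * R (real part, imaginary part). *)
Definition Kty (k : Kfield) : Type :=
  match k with KR => R | KC => (R * R)%type end.

Definition Kadd (k : Kfield) : Kty k -> Kty k -> Kty k :=
  match k return Kty k -> Kty k -> Kty k with
  | KR => Rplus
  | KC => fun x y => (fst x + fst y, snd x + snd y)
  end.

Definition Kmul (k : Kfield) : Kty k -> Kty k -> Kty k :=
  match k return Kty k -> Kty k -> Kty k with
  | KR => Rmult
  | KC => fun x y => (fst x * fst y - snd x * snd y, fst x * snd y + snd x * fst y)
  end.

Definition Kopp (k : Kfield) : Kty k -> Kty k :=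
  match k return Kty k -> Kty k with
  | KR => Ropp
  | KC => fun x => (- fst x, - snd x)
  end.

Definition K0 (k : Kfield) : Kty k :=
  match k return Kty k with KR => 0 | KC => (0, 0) end.

Definition K1 (k : Kfield) : Kty k :=
  match k return Kty k with KR => 1 | KC => (1, 0) end.

Definition KofR (k : Kfield) : R -> Kty k :=
  match k return R -> Kty k with KR => fun r => r | KC => fun r => (r, 0) end.

Definition Kabs (k : Kfield) : Kty k -> R :=
  match k return Kty k -> R with
  | KR => Rabs
  | KC => fun x => sqrt (fst x * fst x + snd x * snd x)
  end.

Definition Ksub (k : Kfield) (x y : Kty k) : Kty k := Kadd k x (Kopp k y).

Record LCS (k : Kfield) : Type := {
  car : Type;
  vadd : car -> car -> car;
  vzero : car;
  vopp : car -> car;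
  vscal : Kty k -> car -> car;
  idx : Type;
  sn : idx -> car -> R
}.
Arguments car {k}. Arguments vadd {k}. Arguments vzero {k}. Arguments vopp {k}.
Arguments vscal {k}. Arguments idx {k}. Arguments sn {k}.

Definition vsub {k} (E : LCS k) (x y : car E) : car E := vadd E x (vopp E y).

Definition is_lcs {k} (E : LCS k) : Prop :=
  (forall x y z, vadd E x (vadd E y z) = vadd E (vadd E x y) z) /\
  (forall x y, vadd E x y = vadd E y x) /\
  (forall x, vadd E x (vzero E) = x) /\
  (forall x, vadd E x (vopp E x) = vzero E) /\
  (forall a b x, vscal E a (vscal E b x) = vscal E (Kmul k a b) x) /\
  (forall x, vscal E (K1 k) x = x) /\
  (forall a x y, vscal E a (vadd E x y) = vadd E (vscal E a x) (vscal E a y)) /\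
  (forall a b x, vscal E (Kadd k a b) x = vadd E (vscal E a x) (vscal E b x)) /\
  (forall i x, 0 <= sn E i x) /\
  (forall i x y, sn E i (vadd E x y) <= sn E i x + sn E i y) /\
  (forall i a x, sn E i (vscal E a x) = Kabs k a * sn E i x) /\
  (forall x, (forall i, sn E i x = 0) -> x = vzero E).

Definition in_ball {k} (E : LCS k) (l : list (idx E)) (r : R) (x y : car E) : Prop :=
  forall i, In i l -> sn E i (vsub E y x) < r.

Definition is_open {k} (E : LCS k) (U : car E -> Prop) : Prop :=
  forall x, U x -> exists (l : list (idx E)) (r : R), 0 < r /\
    forall y, in_ball E l r x y -> U y.

Definition closure {k} (E : LCS k) (A : car E -> Prop) : car E -> Prop :=
  fun x => forall (l : list (idx E)) (r : R), 0 < r ->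
    exists y, A y /\ in_ball E l r x y.

Definition is_compact {k} (E : LCS k) (A : car E -> Prop) : Prop :=
  forall (C : (car E -> Prop) -> Prop),
    (forall U, C U -> is_open E U) ->
    (forall x, A x -> exists U, C U /\ U x) ->
    exists (L : list (car E -> Prop)),
      (forall U, In U L -> C U) /\ (forall x, A x -> exists U, In U L /\ U x).

Definition rel_compact {k} (E : LCS k) (A : car E -> Prop) : Prop :=
  is_compact E (closure E A).

Definition is_bounded {k} (E : LCS k) (A : car E -> Prop) : Prop :=
  forall i, exists M, forall x, A x -> sn E i x <= M.

Definition semi_Montel {k} (E : LCS k) : Prop :=
  forall A, is_bounded E A -> rel_compact E A.

Definition in_dual {k} (E : LCS k) (e : car E -> Kty k) : Prop :=
  (forall x y, e (vadd E x y) = Kadd k (e x) (e y)) /\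
  (forall a x, e (vscal E a x) = Kmul k a (e x)) /\
  (forall x eps, 0 < eps -> exists (l : list (idx E)) (r : R), 0 < r /\
     forall y, in_ball E l r x y -> Kabs k (Ksub k (e y) (e x)) < eps).

Definition dual_subspace {k} (E : LCS k) (G : (car E -> Kty k) -> Prop) : Prop :=
  (forall e, G e -> in_dual E e) /\
  G (fun _ => K0 k) /\
  (forall e1 e2, G e1 -> G e2 -> G (fun x => Kadd k (e1 x) (e2 x))) /\
  (forall a e, G e -> G (fun x => Kmul k a (e x))).

Definition weakly_bounded {k} (E : LCS k) (G : (car E -> Kty k) -> Prop)
  (A : car E -> Prop) : Prop :=
  forall e, G e -> exists M, forall x, A x -> Kabs k (e x) <= M.

Definition determines_boundedness {k} (E : LCS k) (G : (car E -> Kty k) -> Prop) : Prop :=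
  forall A, weakly_bounded E G A -> is_bounded E A.

Definition point (d : nat) : Type := Fin.t d -> R.

Definition open_Rd {d : nat} (Om : point d -> Prop) : Prop :=
  forall x, Om x -> exists r, 0 < r /\
    forall y : point d, (forall j, Rabs (y j - x j) < r) -> Om y.

Definition shift {d : nat} (x : point d) (n : Fin.t d) (h : R) : point d :=
  fun j => if Fin.eq_dec j n then x j + h else x j.

Section Ck.
Variables (V : Type) (vs : V -> V -> V) (rsc : R -> V -> V)
          (J : Type) (q : J -> V -> R) (d : nat) (Om : point d -> Prop).

Definition cont_on (f : point d -> V) : Prop :=
  forall x, Om x -> forall j eps, 0 < eps -> exists del, 0 < del /\
    forall y, Om y -> (forall m, Rabs (y m - x m) < del) -> q j (vs (f y) (f x)) < eps.

Definition has_partial (f : point d -> V) (n : Fin.t d) (x : point d) (v : V) : Prop :=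
  forall j eps, 0 < eps -> exists del, 0 < del /\
    forall h, h <> 0 -> Rabs h < del ->
      q j (vs (rsc (/ h) (vs (f (shift x n h)) (f x))) v) < eps.

Fixpoint Ck (m : nat) (f : point d -> V) : Prop :=
  match m with
  | 0%nat => cont_on f
  | S m' => exists g : Fin.t d -> point d -> V,
      (forall n x, Om x -> has_partial f n x (g n x)) /\
      (forall n, Ck m' (g n))
  end.
End Ck.

Definition CkE {k} (E : LCS k) (d : nat) (Om : point d -> Prop) (m : nat)
  (f : point d -> car E) : Prop :=
  Ck (car E) (vsub E) (fun h x => vscal E (KofR k h) x) (idx E) (sn E) d Om m f.

Definition CkK (k : Kfield) (d : nat) (Om : point d -> Prop) (m : nat)
  (f : point d -> Kty k) : Prop :=
  Ck (Kty k) (Ksub k) (fun h z => Kmul k (KofR k h) z) unit (fun _ z => Kabs k z) d Om m f.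

(* Because E is semi-Montel and G determines boundedness, every sequence whose
   G-images are bounded has a cluster point, and G separates points (a line
   killed by G is G-bounded, hence bounded, hence zero).  Consequently, if
   [e (u N) -> e v] for all [e] in G then [u N -> v] in E: otherwise the terms
   staying ε away from v would cluster at some w with the same G-values as v,
   i.e. at v itself.  Likewise G-limits exist whenever all [e (u N)] converge.
   Applied to [f (y N)] for [y N -> x] and to the difference quotients
   [(f (x + h e_n) - f x) / h], this gives continuity and partial derivatives
   of f in E, and the theorem follows by induction on the order. *)
From Stdlib Require Import Reals Lra Lia List Classical ClassicalEpsilon.
From Coquelicot Require Import Complex.
Open Scope R_scope.

Lemma Kabs_C (z : Kty KC) : Kabs KC z = Cmod z.
Proof. destruct z as [a b]. unfold Kabs, Cmod; simpl. f_equal. ring. Qed.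

Section ScalarField.
Variable k : Kfield.

Lemma Kabs_ge0 (z : Kty k) : 0 <= Kabs k z.
Proof. destruct k; simpl. apply Rabs_pos. apply sqrt_pos. Qed.

Lemma Kabs_sub_triangle (a b c : Kty k) :
  Kabs k (Ksub k a c) <= Kabs k (Ksub k a b) + Kabs k (Ksub k b c).
Proof.
  destruct k.
  - unfold Ksub; simpl. replace (a + - c) with ((a + - b) + (b + - c)) by ring.
    apply Rabs_triang.
  - rewrite !Kabs_C. destruct a as [a1 a2], b as [b1 b2], c as [c1 c2].
    replace (Ksub KC (a1, a2) (c1, c2))
      with (Cplus (Ksub KC (a1, a2) (b1, b2)) (Ksub KC (b1, b2) (c1, c2))).
    + apply Cmod_triangle.
    + unfold Ksub, Cplus; simpl. f_equal; ring.
Qed.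

Lemma Kabs_sub_sym (a b : Kty k) : Kabs k (Ksub k a b) = Kabs k (Ksub k b a).
Proof.
  destruct k.
  - unfold Ksub; simpl. replace (a + - b) with (- (b + - a)) by ring. apply Rabs_Ropp.
  - rewrite !Kabs_C. destruct a as [a1 a2], b as [b1 b2].
    replace (Ksub KC (a1, a2) (b1, b2)) with (Copp (Ksub KC (b1, b2) (a1, a2))).
    + apply Cmod_opp.
    + unfold Ksub, Copp; simpl. f_equal; ring.
Qed.

Lemma Kabs_sub_eq0 (a b : Kty k) : Kabs k (Ksub k a b) = 0 -> a = b.
Proof.
  destruct k; unfold Ksub; simpl.
  - intro H. change (a = b). destruct (Req_dec (a + - b) 0) as [Hz|Hnz]; [lra|].
    apply Rabs_no_R0 in Hnz. lra.
  - destruct a as [a1 a2], b as [b1 b2]; simpl. intro H.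
    apply sqrt_eq_0 in H; [|apply Rplus_le_le_0_compat; apply Rle_0_sqr].
    assert (Hu : (a1 + - b1) * (a1 + - b1) = 0).
    { pose proof (Rle_0_sqr (a1 + - b1)); pose proof (Rle_0_sqr (a2 + - b2));
        unfold Rsqr in *; lra. }
    assert (Hv : (a2 + - b2) * (a2 + - b2) = 0).
    { pose proof (Rle_0_sqr (a1 + - b1)); pose proof (Rle_0_sqr (a2 + - b2));
        unfold Rsqr in *; lra. }
    apply Rmult_integral in Hu. apply Rmult_integral in Hv.
    f_equal; lra.
Qed.

Lemma Ksub_small_eq (a b : Kty k) :
  (forall eps, 0 < eps -> Kabs k (Ksub k a b) < eps) -> a = b.
Proof.
  intro H. apply Kabs_sub_eq0.
  destruct (Rle_lt_or_eq_dec _ _ (Kabs_ge0 (Ksub k a b))) as [Hpos|]; auto.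
  specialize (H _ Hpos). lra.
Qed.

Lemma Kabs_K0 : Kabs k (K0 k) = 0.
Proof. destruct k; simpl. apply Rabs_R0. rewrite Rmult_0_l, Rplus_0_l. apply sqrt_0. Qed.

Lemma Kabs_KofR t : Kabs k (KofR k t) = Rabs t.
Proof. destruct k; simpl; auto. rewrite Rmult_0_l, Rplus_0_r. apply sqrt_Rsqr_abs. Qed.

Lemma Kabs_le_sub_add (a b : Kty k) : Kabs k a <= Kabs k (Ksub k a b) + Kabs k b.
Proof.
  assert (Hsub0 : forall z, Ksub k z (K0 k) = z).
  { destruct k; unfold Ksub; simpl; intros z. ring. destruct z; simpl; f_equal; ring. }
  pose proof (Kabs_sub_triangle a b (K0 k)) as Htri. rewrite !Hsub0 in Htri. exact Htri.
Qed.

Lemma Kadd_idem (z : Kty k) : Kadd k z z = z -> z = K0 k.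
Proof. destruct k; simpl; intros H. lra. destruct z; simpl in *. injection H; intros; f_equal; lra. Qed.

Lemma Kadd_eq_K0 (a b : Kty k) : Kadd k a b = K0 k -> b = Kopp k a.
Proof. destruct k; simpl; intros H. lra. destruct a, b; simpl in *. injection H; intros; f_equal; lra. Qed.

Lemma Ksub_diag (a : Kty k) : Ksub k a a = K0 k.
Proof. destruct k; unfold Ksub; simpl. ring. destruct a; simpl; f_equal; ring. Qed.

Lemma Kmul_K0 (a : Kty k) : Kmul k a (K0 k) = K0 k.
Proof. destruct k; simpl. ring. destruct a; simpl; f_equal; ring. Qed.

Definition Kconv (a : nat -> Kty k) (L : Kty k) : Prop :=
  forall eps, 0 < eps -> exists K, forall n, (K <= n)%nat -> Kabs k (Ksub k (a n) L) < eps.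

Lemma Kconv_bounded (a : nat -> Kty k) L : Kconv a L -> exists M, forall n, Kabs k (a n) <= M.
Proof.
  intros H. destruct (H 1 Rlt_0_1) as [K HK].
  assert (Hinit : forall K, exists M0, forall n, (n < K)%nat -> Kabs k (a n) <= M0).
  { induction K0 as [|K0 [M0 HM0]].
    - exists 0. intros n Hn. inversion Hn.
    - exists (Rmax M0 (Kabs k (a K0))). intros n Hn.
      destruct (Nat.eq_dec n K0) as [->|Hne]; [apply Rmax_r|].
      eapply Rle_trans; [apply HM0; lia|apply Rmax_l]. }
  destruct (Hinit K) as [M0 HM0]. exists (Rmax M0 (1 + Kabs k L)). intro n.
  destruct (Nat.lt_ge_cases n K) as [Hlt|Hge].
  - eapply Rle_trans; [apply HM0; auto|apply Rmax_l].
  - eapply Rle_trans; [|apply Rmax_r].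
    pose proof (Kabs_le_sub_add (a n) L). specialize (HK n Hge). lra.
Qed.

End ScalarField.

Lemma list_margin {A} (a : A -> R) r (l : list A) :
  (forall i, In i l -> a i < r) -> exists r', 0 < r' /\ forall i, In i l -> a i + r' < r.
Proof.
  induction l as [|j l IH]; intros H.
  - exists 1. split; [lra|]. intros i [].
  - destruct IH as [r' [Hr' H']]; [intros; apply H; simpl; auto|].
    assert (Hj : a j < r) by (apply H; simpl; auto).
    exists (Rmin r' ((r - a j) / 2)). split; [apply Rmin_pos; lra|].
    intros i [Hi|Hi]; [subst i|].
    + pose proof (Rmin_r r' ((r - a j) / 2)). lra.
    + pose proof (Rmin_l r' ((r - a j) / 2)). specialize (H' i Hi). lra.
Qed.

Section LocallyConvexSpace.
Variables (k : Kfield) (E : LCS k).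
Hypothesis HE : is_lcs E.

Lemma vadd_assoc x y z : vadd E x (vadd E y z) = vadd E (vadd E x y) z.
Proof. now destruct HE as (H & _). Qed.

Lemma vadd_comm x y : vadd E x y = vadd E y x.
Proof. now destruct HE as (_ & H & _). Qed.

Lemma vadd_vzero x : vadd E x (vzero E) = x.
Proof. now destruct HE as (_ & _ & H & _). Qed.

Lemma vadd_vopp x : vadd E x (vopp E x) = vzero E.
Proof. now destruct HE as (_ & _ & _ & H & _). Qed.

Lemma vscal_vadd a x y : vscal E a (vadd E x y) = vadd E (vscal E a x) (vscal E a y).
Proof. now destruct HE as (_ & _ & _ & _ & _ & _ & H & _). Qed.

Lemma sn_ge0 i x : 0 <= sn E i x.
Proof. now destruct HE as (_ & _ & _ & _ & _ & _ & _ & _ & H & _). Qed.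

Lemma sn_triangle i x y : sn E i (vadd E x y) <= sn E i x + sn E i y.
Proof. now destruct HE as (_ & _ & _ & _ & _ & _ & _ & _ & _ & H & _). Qed.

Lemma sn_vscal i a x : sn E i (vscal E a x) = Kabs k a * sn E i x.
Proof. now destruct HE as (_ & _ & _ & _ & _ & _ & _ & _ & _ & _ & H & _). Qed.

Lemma sn_separated x : (forall i, sn E i x = 0) -> x = vzero E.
Proof. destruct HE as (_ & _ & _ & _ & _ & _ & _ & _ & _ & _ & _ & H). exact (H x). Qed.

Lemma vscal_vzero a : vscal E a (vzero E) = vzero E.
Proof.
  set (s := vscal E a (vzero E)).
  assert (Hs : vadd E s s = s) by (unfold s; rewrite <- vscal_vadd, vadd_vzero; reflexivity).
  transitivity (vadd E (vadd E s s) (vopp E s)).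
  - rewrite <- vadd_assoc, vadd_vopp, vadd_vzero. reflexivity.
  - rewrite Hs, vadd_vopp. reflexivity.
Qed.

Lemma sn_vzero i : sn E i (vzero E) = 0.
Proof. rewrite <- (vscal_vzero (K0 k)), sn_vscal, Kabs_K0. ring. Qed.

Lemma sn_sub_diag i x : sn E i (vsub E x x) = 0.
Proof. unfold vsub. rewrite vadd_vopp. apply sn_vzero. Qed.

Lemma vsub_chain x y z : vsub E z x = vadd E (vsub E z y) (vsub E y x).
Proof.
  unfold vsub. rewrite <- vadd_assoc. f_equal.
  rewrite vadd_assoc, (vadd_comm (vopp E y) y), vadd_vopp, vadd_comm, vadd_vzero.
  reflexivity.
Qed.

Lemma sn_sub_triangle i x y z :
  sn E i (vsub E z x) <= sn E i (vsub E z y) + sn E i (vsub E y x).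
Proof. rewrite (vsub_chain x y z). apply sn_triangle. Qed.

Lemma sn_sub_eq0 x v : (forall i, sn E i (vsub E x v) = 0) -> x = v.
Proof.
  intro H. apply sn_separated in H. unfold vsub in H.
  assert (Hx : vadd E (vadd E x (vopp E v)) v = x).
  { rewrite <- vadd_assoc, (vadd_comm (vopp E v) v), vadd_vopp, vadd_vzero. reflexivity. }
  rewrite H, vadd_comm, vadd_vzero in Hx. symmetry; exact Hx.
Qed.

Lemma in_ball_refl l r x : 0 < r -> in_ball E l r x x.
Proof. intros Hr i _. rewrite sn_sub_diag. exact Hr. Qed.

Lemma in_ball_open l r x : is_open E (in_ball E l r x).
Proof.
  intros y Hy. destruct (list_margin (fun i => sn E i (vsub E y x)) r l Hy) as [r' [Hr' H']].
  exists l, r'. split; [exact Hr'|]. intros z Hz i Hi.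
  pose proof (sn_sub_triangle i x y z). specialize (Hz i Hi). specialize (H' i Hi). lra.
Qed.

Lemma dual_vzero e : in_dual E e -> e (vzero E) = K0 k.
Proof.
  intros [Hadd _]. apply Kadd_idem. rewrite <- Hadd, vadd_vzero. reflexivity.
Qed.

Lemma dual_vopp e v : in_dual E e -> e (vopp E v) = Kopp k (e v).
Proof.
  intros He. apply Kadd_eq_K0. rewrite <- (proj1 He), vadd_vopp. apply dual_vzero, He.
Qed.

Lemma dual_vsub e a b : in_dual E e -> e (vsub E a b) = Ksub k (e a) (e b).
Proof.
  intros He. unfold vsub, Ksub. rewrite <- (dual_vopp e b He). apply (proj1 He).
Qed.

End LocallyConvexSpace.

(** * Weak and strong sequential convergence in a semi-Montel space *)

Section SemiMontel.
Variables (k : Kfield) (E : LCS k).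
Hypotheses (HE : is_lcs E) (HM : semi_Montel E).
Variable G : (car E -> Kty k) -> Prop.
Hypotheses (HG : dual_subspace E G) (Hdet : determines_boundedness E G).

Lemma G_in_dual e : G e -> in_dual E e.
Proof. apply HG. Qed.

Lemma G_separates x v : (forall e, G e -> e x = e v) -> x = v.
Proof.
  intros H. apply (sn_sub_eq0 k E HE). intro i.
  set (z := vsub E x v).
  assert (Hz : forall e, G e -> e z = K0 k).
  { intros e Ge. unfold z. rewrite (dual_vsub k E HE) by (apply G_in_dual; auto).
    rewrite (H e Ge). apply Ksub_diag. }
  assert (Hline : is_bounded E (fun y => exists t, y = vscal E (KofR k t) z)).
  { apply Hdet. intros e Ge. exists 0. intros y [t ->].
    rewrite (proj1 (proj2 (G_in_dual e Ge))), Hz, Kmul_K0, Kabs_K0 by auto. lra. }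
  destruct (Hline i) as [M HMz].
  destruct (Rle_lt_or_eq_dec _ _ (sn_ge0 k E HE i z)) as [Hpos|]; auto.
  (* the multiple of z of seminorm |M| + 1 escapes the bound M *)
  specialize (HMz (vscal E (KofR k ((Rabs M + 1) / sn E i z)) z) (ex_intro _ _ eq_refl)).
  rewrite (sn_vscal k E HE), Kabs_KofR, Rabs_right in HMz.
  - unfold Rdiv in HMz. rewrite Rmult_assoc, Rinv_l in HMz by lra.
    pose proof (Rle_abs M). lra.
  - apply Rle_ge. unfold Rdiv. apply Rmult_le_pos.
    + pose proof (Rabs_pos M); lra.
    + left; apply Rinv_0_lt_compat; lra.
Qed.

Definition cluster_along (u : nat -> car E) (S : nat -> Prop) (w : car E) : Prop :=
  forall l r, 0 < r -> forall K, exists n, (K <= n)%nat /\ S n /\ in_ball E l r w (u n).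

Lemma cluster_along_exists (u : nat -> car E) (S : nat -> Prop) :
  (forall e, G e -> exists M, forall n, Kabs k (e (u n)) <= M) ->
  (forall K, exists n, (K <= n)%nat /\ S n) ->
  exists w, cluster_along u S w.
Proof.
  intros Hwb Hinf.
  set (A := fun y => exists n, S n /\ y = u n).
  assert (HA : is_bounded E A).
  { apply Hdet. intros e Ge. destruct (Hwb e Ge) as [M HMe]. exists M.
    intros y [n [_ ->]]. auto. }
  apply NNPP. intro Hnone.
  (* every point has a ball that the tail of u along S eventually avoids *)
  assert (Havoid : forall w, exists l r K, 0 < r /\
            forall n, (K <= n)%nat -> S n -> ~ in_ball E l r w (u n)).
  { intro w. apply NNPP. intro H'. apply Hnone. exists w. intros l r Hr K.
    apply NNPP. intro H''. apply H'. exists l, r, K. split; auto.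
    intros n Hn HS Hb. apply H''. eauto. }
  set (C := fun U : car E -> Prop => exists w l r K, 0 < r /\ U = in_ball E l r w /\
            forall n, (K <= n)%nat -> S n -> ~ in_ball E l r w (u n)).
  destruct (HM A HA C) as [L [HLC HLcov]].
  - intros U [w [l [r [K [_ [-> _]]]]]]. apply (in_ball_open k E HE).
  - intros x _. destruct (Havoid x) as [l [r [K [Hr HK]]]]. exists (in_ball E l r x).
    split; [exists x, l, r, K; auto|apply (in_ball_refl k E HE); auto].
  - assert (HK : exists K, forall U, In U L -> forall n, (K <= n)%nat -> S n -> ~ U (u n)).
    { clear HLcov. induction L as [|U0 L IH].
      - exists 0%nat. intros U [].
      - destruct IH as [K1 HK1]; [intros; apply HLC; simpl; auto|].
        destruct (HLC U0 (or_introl eq_refl)) as [w [l [r [K0 [_ [-> HK0]]]]]].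
        exists (max K0 K1). intros U [HU|HU] n Hn; [subst U|].
        + apply HK0. lia.
        + apply HK1; auto. lia. }
    destruct HK as [K HK]. destruct (Hinf K) as [n [Hn HS]].
    destruct (HLcov (u n)) as [U [HU HUn]].
    + intros l r Hr. exists (u n). split; [exists n; auto|apply (in_ball_refl k E HE); auto].
    + exact (HK U HU n Hn HS HUn).
Qed.

Lemma cluster_along_dual_lim u S w e L :
  cluster_along u S w -> in_dual E e -> Kconv k (fun n => e (u n)) L -> e w = L.
Proof.
  intros Hc He Hconv. apply Ksub_small_eq. intros eps Heps.
  destruct (proj2 (proj2 He) w (eps / 2)) as [l [r [Hr Hball]]]; [lra|].
  destruct (Hconv (eps / 2)) as [K HK]; [lra|].
  destruct (Hc l r Hr K) as [n [Hn [_ Hin]]].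
  specialize (Hball _ Hin). specialize (HK n Hn).
  pose proof (Kabs_sub_triangle k (e w) (e (u n)) L). rewrite Kabs_sub_sym in Hball. lra.
Qed.

Lemma weak_limit_exists (u : nat -> car E) :
  (forall e, G e -> exists L, Kconv k (fun n => e (u n)) L) ->
  exists w, forall e, G e -> forall L, Kconv k (fun n => e (u n)) L -> e w = L.
Proof.
  intros H. destruct (cluster_along_exists u (fun _ => True)) as [w Hw].
  - intros e Ge. destruct (H e Ge) as [L HL]. exact (Kconv_bounded k _ L HL).
  - intro K. exists K. auto.
  - exists w. intros e Ge L HL. eapply cluster_along_dual_lim; eauto. apply G_in_dual, Ge.
Qed.

Definition sn_cvg (u : nat -> car E) (v : car E) : Prop :=
  forall j eps, 0 < eps -> exists K, forall n, (K <= n)%nat -> sn E j (vsub E (u n) v) < eps.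

Lemma weak_cvg_sn_cvg (u : nat -> car E) v :
  (forall e, G e -> Kconv k (fun n => e (u n)) (e v)) -> sn_cvg u v.
Proof.
  intros H j eps Heps. apply NNPP. intro Hn.
  set (S := fun n => eps <= sn E j (vsub E (u n) v)).
  assert (Hinf : forall K, exists n, (K <= n)%nat /\ S n).
  { intro K. apply NNPP. intro H'. apply Hn. exists K. intros n Hn1.
    apply Rnot_le_lt. intro H''. apply H'. exists n. auto. }
  destruct (cluster_along_exists u S) as [w Hw]; auto.
  - intros e Ge. exact (Kconv_bounded k _ (e v) (H e Ge)).
  - assert (Hwv : w = v).
    { apply G_separates. intros e Ge.
      eapply cluster_along_dual_lim; eauto. apply G_in_dual, Ge. }
    subst w. destruct (Hw (j :: nil) eps Heps 0%nat) as [n [_ [HS Hb]]].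
    specialize (Hb j (or_introl eq_refl)). unfold S in HS. lra.
Qed.

End SemiMontel.

Lemma inv_succ_pos n : 0 < / (INR n + 1).
Proof. apply Rinv_0_lt_compat. pose proof (pos_INR n); lra. Qed.

Lemma inv_succ_lt del : 0 < del -> exists K, forall n, (K <= n)%nat -> / (INR n + 1) < del.
Proof.
  intros Hd. destruct (archimed_cor1 del Hd) as [N [HN HN0]]. exists N. intros n Hn.
  eapply Rle_lt_trans; [|apply HN]. apply Rlt_le. apply Rinv_lt_contravar.
  - apply Rmult_lt_0_compat. apply lt_0_INR; lia. pose proof (pos_INR n); lra.
  - apply le_INR in Hn. lra.
Qed.

Lemma sequential_criterion {A : Type} (near : R -> A -> Prop) (good : A -> Prop) :
  (forall a : nat -> A, (forall N, near (/ (INR N + 1)) (a N)) ->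
     exists K, forall N, (K <= N)%nat -> good (a N)) ->
  exists del, 0 < del /\ forall y, near del y -> good y.
Proof.
  intros H. apply NNPP. intro Hn.
  assert (Hbad : forall N : nat, exists y, near (/ (INR N + 1)) y /\ ~ good y).
  { intro N. apply NNPP. intro H'. apply Hn. exists (/ (INR N + 1)).
    split; [apply inv_succ_pos|]. intros y Hy. apply NNPP. intro Hg. apply H'. eauto. }
  destruct (choice _ Hbad) as [a Ha].
  destruct (H a) as [K HK]; [intro N; apply Ha|].
  exact (proj2 (Ha K) (HK K (le_n K))).
Qed.

Lemma shift_close d (x : point d) n h j : Rabs (shift x n h j - x j) <= Rabs h.
Proof.
  unfold shift. destruct (Fin.eq_dec j n).
  - replace (x j + h - x j) with h by ring. lra.
  - replace (x j - x j) with 0 by ring. rewrite Rabs_R0. apply Rabs_pos.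
Qed.

Lemma Ck_eq_on V vs rsc J q d Om (HOm : @open_Rd d Om) m : forall f1 f2,
  (forall x, Om x -> f1 x = f2 x) -> Ck V vs rsc J q d Om m f1 -> Ck V vs rsc J q d Om m f2.
Proof.
  induction m as [|m IH]; intros f1 f2 Heq Hc.
  - intros x Hx j eps He. destruct (Hc x Hx j eps He) as [del [Hd Hcont]].
    exists del; split; auto. intros y Hy Hyx. rewrite <- !Heq by auto. apply Hcont; auto.
  - destruct Hc as [g [Hp Hg]]. exists g; split; auto.
    intros n x Hx j eps He. destruct (Hp n x Hx j eps He) as [del [Hd Hpart]].
    destruct (HOm x Hx) as [r [Hr Hball]]. exists (Rmin del r). split; [apply Rmin_pos; auto|].
    intros h Hh0 Hh.
    rewrite <- !Heq by (auto; apply Hball; intro j';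
      pose proof (shift_close d x n h j'); pose proof (Rmin_r del r); lra).
    apply Hpart; auto. pose proof (Rmin_l del r); lra.
Qed.

(** * Scalarly C^k functions are C^k *)

Section ScalarlyCk.
Variables (k : Kfield) (E : LCS k).
Hypotheses (HE : is_lcs E) (HM : semi_Montel E).
Variable G : (car E -> Kty k) -> Prop.
Hypotheses (HG : dual_subspace E G) (Hdet : determines_boundedness E G).
Variables (d : nat) (Om : point d -> Prop).
Hypothesis HOm : open_Rd Om.

Definition diff_quot (f : point d -> car E) n x h : car E :=
  vscal E (KofR k (/ h)) (vsub E (f (shift x n h)) (f x)).

Definition partialE (f : point d -> car E) n x v : Prop :=
  has_partial (car E) (vsub E) (fun h x => vscal E (KofR k h) x) (idx E) (sn E) d f n x v.

Definition partialK (g : point d -> Kty k) n x L : Prop :=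
  has_partial (Kty k) (Ksub k) (fun h z => Kmul k (KofR k h) z) unit (fun _ z => Kabs k z)
    d g n x L.

Lemma scalarly_continuous f :
  (forall e, G e -> CkK k d Om 0 (fun x => e (f x))) -> CkE E d Om 0 f.
Proof.
  intros Hf x Hx j eps Heps.
  destruct (sequential_criterion (fun del y => Om y /\ forall i, Rabs (y i - x i) < del)
              (fun y => sn E j (vsub E (f y) (f x)) < eps)) as [del [Hdel Hnear]].
  - intros y Hy. refine (weak_cvg_sn_cvg k E HE HM G HG Hdet (fun N => f (y N)) (f x) _ j eps Heps).
    intros e Ge eps' Heps'. destruct (Hf e Ge x Hx tt eps' Heps') as [del [Hdel Hc]].
    destruct (inv_succ_lt del Hdel) as [K HK]. exists K. intros n Hn.
    destruct (Hy n) as [Hyn Hclose]. apply Hc; auto.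
    intro i. specialize (Hclose i). specialize (HK n Hn). lra.
  - exists del. split; [exact Hdel|]. intros y Hy Hyx. apply Hnear; auto.
Qed.

Lemma diff_quot_dual_cvg e f n x L (hs : nat -> R) :
  in_dual E e -> partialK (fun y => e (f y)) n x L ->
  (forall N, hs N <> 0 /\ Rabs (hs N) <= / (INR N + 1)) ->
  Kconv k (fun N => e (diff_quot f n x (hs N))) L.
Proof.
  intros He Hp Hhs eps Heps. destruct (Hp tt eps Heps) as [del [Hd Hpart]].
  destruct (inv_succ_lt del Hd) as [K HK]. exists K. intros N HN.
  destruct (Hhs N) as [Hnz Hsmall]. specialize (HK N HN).
  unfold diff_quot. rewrite (proj1 (proj2 He)), (dual_vsub k E HE e) by exact He.
  apply Hpart; [exact Hnz|lra].
Qed.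

Lemma scalarly_partial f n x :
  (forall e, G e -> exists L, partialK (fun y => e (f y)) n x L) ->
  exists v, partialE f n x v /\
    forall e, G e -> forall L, partialK (fun y => e (f y)) n x L -> e v = L.
Proof.
  intros Hf.
  assert (HGd : forall e, G e -> in_dual E e) by apply HG.
  assert (Hinv : forall N, / (INR N + 1) <> 0 /\ Rabs (/ (INR N + 1)) <= / (INR N + 1)).
  { intro N. pose proof (inv_succ_pos N).
    split; [lra|rewrite Rabs_right; lra]. }
  destruct (weak_limit_exists k E HE HM G HG Hdet
              (fun N => diff_quot f n x (/ (INR N + 1)))) as [w Hw].
  { intros e Ge. destruct (Hf e Ge) as [L HL]. exists L.
    apply diff_quot_dual_cvg; auto. }
  exists w. split.
  - intros j eps Heps.
    destruct (sequential_criterion (fun del h => h <> 0 /\ Rabs h < del)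
                (fun h => sn E j (vsub E (diff_quot f n x h) w) < eps)) as [del [Hdel Hnear]].
    + intros hs Hhs.
      refine (weak_cvg_sn_cvg k E HE HM G HG Hdet _ w _ j eps Heps).
      intros e Ge. destruct (Hf e Ge) as [L HL].
            rewrite (Hw e Ge L) by (apply diff_quot_dual_cvg; auto).
      apply diff_quot_dual_cvg; auto.
      intro N. destruct (Hhs N). split; auto. lra.
    + exists del. split; [exact Hdel|]. intros h Hh0 Hh. apply Hnear; auto.
  - intros e Ge L HL. apply Hw; auto.
    apply diff_quot_dual_cvg; auto.
Qed.

Lemma scalarly_Ck m : forall f,
  (forall e, G e -> CkK k d Om m (fun x => e (f x))) -> CkE E d Om m f.
Proof.
  induction m as [|m IH]; intros f Hf.
  - apply scalarly_continuous, Hf.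
  - set (P := fun n x v => partialE f n x v /\
         forall e, G e -> forall L, partialK (fun y => e (f y)) n x L -> e v = L).
    set (g := fun n x => epsilon (inhabits (vzero E)) (P n x)).
    assert (Hg : forall n x, Om x -> P n x (g n x)).
    { intros n x Hx. apply epsilon_spec, scalarly_partial.
      intros e Ge. destruct (Hf e Ge) as [ge [Hge _]]. exists (ge n x). exact (Hge n x Hx). }
    exists g. split.
    + intros n x Hx. apply (Hg n x Hx).
    + intro n. apply IH. intros e Ge. destruct (Hf e Ge) as [ge [Hge Hgem]].
      apply (Ck_eq_on _ _ _ _ _ d Om HOm m (ge n)); [|apply Hgem].
      intros x Hx. symmetry. apply (proj2 (Hg n x Hx) e Ge), Hge, Hx.
Qed.

End ScalarlyCk.

Theorem mainTheorem12 (k : Kfield) (E : LCS k) (HE : is_lcs E)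
  (HM : semi_Montel E)
  (G : (car E -> Kty k) -> Prop) (HG : dual_subspace E G)
  (Hdet : determines_boundedness E G)
  (d : nat) (Om : point d -> Prop) (HOm : open_Rd Om)
  (m : nat) (Hm : (1 <= m)%nat)
  (f : point d -> car E)
  (Hf : forall e, G e -> CkK k d Om m (fun x => e (f x))) :
  CkE E d Om m f.
Proof. exact (scalarly_Ck k E HE HM G HG Hdet d Om HOm m f Hf). Qed.
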